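(* For every $n\geq 1$, there exists an NFA $M$ with $n+1$ states over a three-letter alphabet $\Sigma$, with a single initial state and all states final, such that any NFA accepting the complement $\Sigma^*\setminus L(M)$ has at least $2^n$ states.
   Context: An NFA is a quintuple $M=(Q,\Sigma,\delta,q_0,F)$ with finite state set $Q$, transition function $\delta: Q\times\Sigma\to 2^Q$, initial state $q_0$ and final states $F$; $L(M)$ is the set of words $w$ with $\delta(q_0,w)\cap F\ne\emptyset$. *)

From mathcomp Require Import all_boot.
Set Implicit Arguments. Unset Strict Implicit. Unset Printing Implicit Defensive.

Record nfa (Q Sigma : finType) := NFA {
  nfa_delta : Q -> Sigma -> {set Q};
  nfa_init : Q;
  nfa_final : {set Q} }.

Fixpoint nfa_delta_star (Q Sigma : finType) (M : nfa Q Sigma) (q : Q) (w : seq Sigma)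
  : {set Q} :=
  match w with
  | [::] => [set q]
  | a :: w' => \bigcup_(p in nfa_delta M q a) nfa_delta_star M p w'
  end.

Definition nfa_accepts (Q Sigma : finType) (M : nfa Q Sigma) (w : seq Sigma) : bool :=
  nfa_delta_star M (nfa_init M) w :&: nfa_final M != set0.

From mathcomp Require Import all_boot.
From mathcomp Require Import zify.
Set Implicit Arguments. Unset Strict Implicit. Unset Printing Implicit Defensive.

(* The automaton has a start state that loops on [a] and [b] and, on [a], may
   also jump to a counter 0, ..., n-1; counters advance on [a] and [b], idle
   on [c], and at n-1 die on [a] and wrap to 0 on [b].  Encode a bit string s
   of length n as a word over {a, b}.  After reading s, the counters reached
   record the positions of the 1s of s; after [c], a counter recording position
   k survives the code of t iff bit k of t is 0.  Hence code s ++ c ++ code t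
   is rejected iff s <= t bitwise, and the 2^n pairs (code s, c ++ code s) form
   a fooling set for the complement. *)

Section NFATheory.

Variables (Q Sigma : finType) (M : nfa Q Sigma).

Definition nfa_accepts_from (q : Q) (w : seq Sigma) : bool :=
  nfa_delta_star M q w :&: nfa_final M != set0.

Lemma nfa_delta_star_cat q x y :
  nfa_delta_star M q (x ++ y) = \bigcup_(p in nfa_delta_star M q x) nfa_delta_star M p y.
Proof.
elim: x q => [|a x IH] q /=; first by rewrite big_set1.
apply/setP => r; apply/bigcupP/bigcupP => [[p pq]|[p' /bigcupP[p pq p'p] rp']].
  by rewrite IH => /bigcupP[p' p'p rp']; exists p' => //; apply/bigcupP; exists p.
by exists p => //; rewrite IH; apply/bigcupP; exists p'.
Qed.

Lemma nfa_accepts_cat x y :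
  nfa_accepts M (x ++ y) =
  [exists p in nfa_delta_star M (nfa_init M) x, nfa_accepts_from p y].
Proof.
rewrite /nfa_accepts nfa_delta_star_cat; apply/set0Pn/existsP.
  case=> r; rewrite inE => /andP[/bigcupP[p px rp] rF].
  by exists p; rewrite px; apply/set0Pn; exists r; rewrite inE rp.
case=> p /andP[px /set0Pn[r]]; rewrite inE => /andP[rp rF].
by exists r; rewrite inE rF andbT; apply/bigcupP; exists p.
Qed.

Lemma nfa_delta_star_cons_set0 q a w :
  nfa_delta M q a = set0 -> nfa_delta_star M q (a :: w) = set0.
Proof. by move=> /= ->; rewrite big_set0. Qed.

Lemma nfa_delta_star_cons_set1 q a w p :
  nfa_delta M q a = [set p] -> nfa_delta_star M q (a :: w) = nfa_delta_star M p w.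
Proof. by move=> /= ->; rewrite big_set1. Qed.

Lemma nfa_delta_star_cons_set2 q a w p1 p2 :
  nfa_delta M q a = [set p1; p2] ->
  nfa_delta_star M q (a :: w) = nfa_delta_star M p1 w :|: nfa_delta_star M p2 w.
Proof. by move=> /= ->; rewrite bigcup_setU !big_set1. Qed.

(* The fooling-set method: the states reached midway through the accepting
   runs on [x i ++ y i] must be pairwise distinct. *)
Lemma nfa_fooling_set (I : finType) (x y : I -> seq Sigma) :
  (forall i, nfa_accepts M (x i ++ y i)) ->
  (forall i j, nfa_accepts M (x i ++ y j) -> nfa_accepts M (x j ++ y i) -> i = j) ->
  #|I| <= #|Q|.
Proof.
move=> acc_xy fooling.
have mid i : exists p, (p \in nfa_delta_star M (nfa_init M) (x i)) && nfa_accepts_from p (y i).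
  by apply/existsP; rewrite -nfa_accepts_cat.
pose f i := xchoose (mid i).
suff /leq_card : injective f by [].
move=> i j fij; have /andP[xi yi] := xchooseP (mid i); have /andP[xj yj] := xchooseP (mid j).
rewrite -/(f i) fij in xi yi; rewrite -/(f j) in xj yj.
by apply: fooling; rewrite nfa_accepts_cat; apply/existsP; exists (f j); apply/andP.
Qed.

End NFATheory.

Definition sym_a : 'I_3 := Ordinal (isT : 0 < 3).
Definition sym_b : 'I_3 := Ordinal (isT : 1 < 3).
Definition sym_c : 'I_3 := Ordinal (isT : 2 < 3).

Definition bit_sym (b : bool) : 'I_3 := if b then sym_a else sym_b.

Definition code (s : bitseq) : seq 'I_3 := map bit_sym s.

(* Positions of the 1s of [s], counted from the right. *)
Fixpoint marks (s : bitseq) : seq nat :=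
  if s is b :: s' then (if b then size s' :: marks s' else marks s') else [::].

Lemma mem_marks s i : (i \in marks s) = (i < size s) && nth false (rev s) i.
Proof.
elim: s => [|b s IH] //=; rewrite rev_cons nth_rcons size_rev ltnS.
rewrite (fun_if (fun r => i \in r)) inE IH.
by case: ltngtP => [i_lt|i_gt|->]; case: b; rewrite ?ltnn ?(ltnW i_gt) ?ltnNge.
Qed.

Lemma marks_lt s i : i \in marks s -> i < size s.
Proof. by rewrite mem_marks => /andP[]. Qed.

Lemma marks_inj s t : size s = size t -> marks s =i marks t -> s = t.
Proof.
move=> size_st marks_st; apply: (can_inj revK).
apply: (eq_from_nth (x0 := false)) => [|i]; first by rewrite !size_rev.
by rewrite size_rev => i_lt; have := marks_st i; rewrite !mem_marks -size_st i_lt.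
Qed.

Lemma bigcup_seq_eq0 (I : Type) (T : finType) (r : seq I) (F : I -> {set T}) :
  (\bigcup_(i <- r) F i == set0) = all (fun i => F i == set0) r.
Proof. by elim: r => [|i r IH]; rewrite ?big_nil ?big_cons ?eqxx // setU_eq0 IH. Qed.

Section GuessNFA.

Variable n : nat.

Definition guess_delta (p : 'I_n.+1) (x : 'I_3) : {set 'I_n.+1} :=
  if p == ord_max then
    if x == sym_a then [set ord_max; inord 0]
    else if x == sym_b then [set ord_max] else set0
  else if x == sym_c then [set p]
  else if p.+1 < n then [set inord p.+1]
  else if x == sym_a then set0 else [set inord 0].

Definition guess_nfa : nfa 'I_n.+1 'I_3 := NFA guess_delta ord_max setT.

Local Notation delta_star := (nfa_delta_star guess_nfa).

Lemma inord_neq_ord_max j : j < n -> (inord j == ord_max :> 'I_n.+1) = false.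
Proof. by move=> j_lt; rewrite -val_eqE /= inordK; lia. Qed.

Lemma guess_delta_start_bit b :
  nfa_delta guess_nfa ord_max (bit_sym b) =
  if b then [set ord_max; inord 0] else [set ord_max].
Proof. by rewrite /= /guess_delta eqxx; case: b. Qed.

Lemma guess_delta_start_c : nfa_delta guess_nfa ord_max sym_c = set0.
Proof. by rewrite /= /guess_delta eqxx. Qed.

Lemma guess_delta_counter_c j : j < n -> nfa_delta guess_nfa (inord j) sym_c = [set inord j].
Proof. by move=> j_lt; rewrite /= /guess_delta inord_neq_ord_max. Qed.

Lemma guess_delta_counter_bit j b :
  j.+1 < n -> nfa_delta guess_nfa (inord j) (bit_sym b) = [set inord j.+1].
Proof.
move=> j_lt; have j_le : j <= n by lia.
by rewrite /= /guess_delta (inord_neq_ord_max (ltnW j_lt)) (inordK j_le) j_lt; case: b.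
Qed.

Lemma guess_delta_last_bit b :
  0 < n -> nfa_delta guess_nfa (inord n.-1) (bit_sym b) = if b then set0 else [set inord 0].
Proof.
move=> n_gt0; have lt_n : n.-1 < n by rewrite prednK.
rewrite /= /guess_delta (inord_neq_ord_max lt_n) (inordK (ltnW lt_n)) prednK //.
by rewrite ltnn; case: b.
Qed.

Lemma delta_star_counter_code j s z :
  j + size s < n -> delta_star (inord j) (code s ++ z) = delta_star (inord (j + size s)) z.
Proof.
elim: s j => [|b s IH] j; first by rewrite addn0.
rewrite [code _ ++ _]/= [size _]/= => lt_n.
rewrite (nfa_delta_star_cons_set1 _ (guess_delta_counter_bit _ _)); last lia.
by rewrite IH addSnnS //; lia.
Qed.

(* A counter j reads the first n-1-j letters of [code t] up to n-1 and then
   survives exactly if the next bit of t is 0. *)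
Lemma delta_star_counter_code_eq0 j t :
  j < n -> size t = n -> (delta_star (inord j) (code t) == set0) = (j \in marks t).
Proof.
move=> j_lt size_t; have size_drop_t := size_drop (n - j.+1) t.
case drop_t: (drop _ t) size_drop_t => [|x t2]; rewrite size_t /=; first lia.
move=> size_drop_t; have size_t2 : size t2 = j by lia.
have -> : j \in marks t = x.
  by rewrite mem_marks size_t j_lt nth_rev size_t // -[n - _]addn0 -nth_drop drop_t.
have -> : code t = code (take (n - j.+1) t) ++ bit_sym x :: code t2.
  by rewrite -[bit_sym x :: _]/(code (x :: t2)) -drop_t -map_cat cat_take_drop.
rewrite delta_star_counter_code size_takel ?size_t ?leq_subr //; last lia.
have -> : j + (n - j.+1) = n.-1 by lia.
case: x {drop_t}.
  by rewrite (nfa_delta_star_cons_set0 _ (guess_delta_last_bit true _)) ?eqxx //; lia.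
rewrite (nfa_delta_star_cons_set1 _ (guess_delta_last_bit false _)); last lia.
rewrite -[code t2]cats0 delta_star_counter_code /=; last lia.
by apply/set0Pn; exists (inord (size t2)); rewrite set11.
Qed.

Lemma delta_star_start_code s z :
  size s <= n ->
  delta_star ord_max (code s ++ z) =
  delta_star ord_max z :|: \bigcup_(i <- marks s) delta_star (inord i) z.
Proof.
elim: s => [|b s IH] s_le; first by rewrite big_nil setU0.
have {}IH := IH (ltnW s_le); rewrite [code _ ++ _]/=; case: b s_le => s_lt.
  rewrite (nfa_delta_star_cons_set2 _ (guess_delta_start_bit true)) IH.
  by rewrite delta_star_counter_code // add0n big_cons setUAC setUA.
by rewrite (nfa_delta_star_cons_set1 _ (guess_delta_start_bit false)) IH.
Qed.

Lemma guess_nfa_rejectsP s t :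
  size s = n -> size t = n ->
  reflect {subset marks s <= marks t} (~~ nfa_accepts guess_nfa (code s ++ sym_c :: code t)).
Proof.
move=> size_s size_t; rewrite /nfa_accepts setIT negbK delta_star_start_code ?size_s //.
rewrite (nfa_delta_star_cons_set0 _ guess_delta_start_c) set0U bigcup_seq_eq0.
have counter_dies i : i \in marks s ->
    (delta_star (inord i) (sym_c :: code t) == set0) = (i \in marks t).
  move=> /marks_lt; rewrite size_s => i_lt.
  rewrite (nfa_delta_star_cons_set1 _ (guess_delta_counter_c i_lt)).
  exact: delta_star_counter_code_eq0.
apply: (iffP allP) => sub i i_s; first by rewrite -counter_dies // sub.
by rewrite counter_dies // sub.
Qed.

End GuessNFA.

Theorem mainTheorem15 (n : nat) (hn : 1 <= n) :
  exists M : nfa 'I_n.+1 'I_3,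
    nfa_final M = [set: 'I_n.+1] /\
    forall (Q' : finType) (M' : nfa Q' 'I_3),
      (forall w : seq 'I_3, nfa_accepts M' w = ~~ nfa_accepts M w) ->
      2 ^ n <= #|Q'|.
Proof.
exists (guess_nfa n); split => // Q' M' M'_compl.
rewrite -[2]card_bool -card_tuple.
apply: (nfa_fooling_set (M := M') (x := fun s : n.-tuple bool => code s)
                        (y := fun t : n.-tuple bool => sym_c :: code t)) => [s | s t].
  by rewrite M'_compl; apply/guess_nfa_rejectsP; rewrite ?size_tuple.
rewrite !M'_compl => /guess_nfa_rejectsP st /guess_nfa_rejectsP ts.
apply/val_inj/marks_inj; rewrite ?size_tuple // => i.
by apply/idP/idP => [/st|/ts]; rewrite ?size_tuple //; apply.
Qed.
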